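(* Let $T$ be the operator on $H^2$ given by $Tf=\sum_{m=0}^\infty\left(\sum_{n=0}^\infty n!\,\hat f(n+m)\right)z^m$, with domain $D(T)=\{f\in H^2: Tf\in H^2\}$ (i.e. those $f$ for which every inner series converges and the resulting coefficient sequence is square summable). Then every function $f\in D(T)$ is an entire function and can be written as $f(z)=\sum_{n=0}^\infty a_n\frac{z^n}{n!}$ where $\sum_{n=0}^\infty a_n$ converges.
   Context: $H^2$ is the Hardy space of analytic functions $f(z)=\sum_{n\ge0}\hat f(n)z^n$ on the unit disc with $\sum|\hat f(n)|^2<\infty$. *)

From Stdlib Require Import Reals Arith Factorial.
From Coquelicot Require Import Coquelicot.
Open Scope R_scope.

(* An element f of H^2 is identified with its Taylor coefficient sequence
   c n = \hat f(n), which must be square summable. *)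
Definition in_H2 (c : nat -> C) : Prop :=
  ex_series (fun n => (Cmod (c n)) ^ 2).

Definition in_dom_T (c : nat -> C) : Prop :=
  in_H2 c /\
  exists t : nat -> C,
    (forall m : nat,
       is_series (fun n => (RtoC (INR (fact n)) * c (n + m)%nat)%C) (t m)) /\
    in_H2 t.

Definition is_entire_coef (c : nat -> C) : Prop :=
  forall z : C, ex_pseries c z.

(* Taking m = 0 in the definition of T shows that a n := n! * c n is a
   convergent series; in particular a is bounded, say by M, so
   |c n z^n| <= M |z|^n / n!, and the Taylor series of f is dominated by
   M exp |z| at every z. *)

From Stdlib Require Import Reals Arith Factorial Lra Lia.
From Coquelicot Require Import Coquelicot.

Lemma RtoC_INR_fact_neq0 (n : nat) : RtoC (INR (fact n)) <> 0%C.
Proof.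
  intros H; apply (not_0_INR _ (fact_neq_0 n)).
  exact (f_equal fst H).
Qed.

Lemma Cmod_pow_n (z : C) (n : nat) : Cmod (pow_n z n) = Cmod z ^ n.
Proof.
  induction n as [|n IH]; simpl; [apply Cmod_1|].
  now rewrite Cmod_mult, IH.
Qed.

Lemma bounded_initial_segment {K : AbsRing} {V : NormedModule K}
  (a : nat -> V) (N : nat) :
  exists M, forall n, (n < N)%nat -> norm (a n) <= M.
Proof.
  induction N as [|N [M HM]].
  - exists 0; intros; lia.
  - exists (Rmax M (norm (a N))); intros n Hn.
    destruct (Nat.eq_dec n N) as [->|Hne]; [apply Rmax_r|].
    apply (Rle_trans _ M); [apply HM; lia|apply Rmax_l].
Qed.

Lemma ex_series_bounded {K : AbsRing} {V : CompleteNormedModule K}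
  (a : nat -> V) :
  ex_series a -> exists M, forall n, norm (a n) <= M.
Proof.
  intros Ha.
  destruct (Cauchy_ex_series a Ha (mkposreal 1 Rlt_0_1)) as [N HN].
  destruct (bounded_initial_segment a N) as [M HM].
  exists (Rmax M 1); intros n.
  destruct (Nat.lt_ge_cases n N) as [Hn|Hn].
  - apply (Rle_trans _ M); [apply HM, Hn|apply Rmax_l].
  - specialize (HN n n Hn Hn); rewrite sum_n_n in HN.
    apply (Rle_trans _ 1); [now left|apply Rmax_r].
Qed.

Lemma ex_pseries_div_fact (a : nat -> C) (M : R) (z : C) :
  (forall n, Cmod (a n) <= M) ->
  ex_pseries (fun n => (a n / RtoC (INR (fact n)))%C) z.
Proof.
  intros HM.
  apply (ex_series_le (K:=C_AbsRing) (V:=C_CompleteNormedModule) _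
           (fun n => M * (Cmod z ^ n / INR (fact n)))).
  - intros n.
    change (Cmod (pow_n z n * (a n / RtoC (INR (fact n))))%C
              <= M * (Cmod z ^ n / INR (fact n))).
    assert (Hfact : 0 < INR (fact n)) by apply lt_0_INR, lt_O_fact.
    rewrite Cmod_mult, Cmod_pow_n, Cmod_div by apply RtoC_INR_fact_neq0.
    rewrite Cmod_R, Rabs_pos_eq by lra.
    assert (Hz : 0 <= Cmod z ^ n / INR (fact n))
      by (apply Rdiv_le_0_compat; [apply pow_le, Cmod_ge_0|exact Hfact]).
    replace (Cmod z ^ n * (Cmod (a n) / INR (fact n)))
      with (Cmod (a n) * (Cmod z ^ n / INR (fact n))) by (unfold Rdiv; ring).
    now apply Rmult_le_compat_r.
  - exists (M * exp (Cmod z)).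
    apply (is_series_scal_l (K:=R_AbsRing) (V:=R_NormedModule) M).
    exact (is_exp_Reals (Cmod z)).
Qed.

Lemma in_dom_T_ex_series_fact_mul (c : nat -> C) :
  in_dom_T c -> ex_series (fun n => (RtoC (INR (fact n)) * c n)%C).
Proof.
  intros [_ [t [Ht _]]]; exists (t 0%nat).
  eapply is_series_ext; [|apply (Ht 0%nat)].
  intros n; cbv beta; now rewrite Nat.add_0_r.
Qed.

Theorem theorem3 (c : nat -> C) :
  in_dom_T c ->
  is_entire_coef c /\
  exists a : nat -> C,
    (forall n : nat, c n = (a n / RtoC (INR (fact n)))%C) /\ ex_series a.
Proof.
  intros Hc.
  set (a := fun n => (RtoC (INR (fact n)) * c n)%C).
  assert (Ha : ex_series a) by now apply in_dom_T_ex_series_fact_mul.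
  assert (Hca : forall n, c n = (a n / RtoC (INR (fact n)))%C).
  { intros n; unfold a; field; apply RtoC_INR_fact_neq0. }
  split; [|now exists a].
  destruct (ex_series_bounded a Ha) as [M HM].
  intros z; eapply ex_series_ext; [|apply (ex_pseries_div_fact a M z HM)].
  intros n; simpl; now rewrite <- Hca.
Qed.
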